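(* Let $F>0$ and let $\{g_n\}_{n<0}$ be real numbers with $\liminf_{n\to-\infty}|n|^{-1/2}g_n>-\sqrt{F}$. Then for every $E\in\mathbb{R}$ there is a non-trivial $\psi\in L^2((-\infty,0))$ which solves $-\psi''(x)-Fx\psi(x)=E\psi(x)$ for $x\in(-\infty,0)\setminus\mathbb{Z}$, is continuous at every negative integer $n$, and satisfies $\lim_{\epsilon\to0^+}(\psi'(n+\epsilon)-\psi'(n-\epsilon))=g_n\psi(n)$ for every negative integer $n$. *)

From Stdlib Require Export Reals ZArith.
From Coquelicot Require Export Coquelicot.
Open Scope R_scope.

(* The sequence k |-> |n|^{-1/2} g_n with n = -(k+1), i.e. n -> -oo as k -> +oo. *)
Definition scaled_seq (g : Z -> R) (k : nat) : R :=
  let n := (- (Z.of_nat k + 1))%Z in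
  / sqrt (Rabs (IZR n)) * g n.

(* psi in L^2((-oo,0)): the (improper) integral of psi^2 over (-oo,0) exists.
   (psi is forced continuous on (-oo,0) by the other hypotheses, so for it this
   coincides with Lebesgue square-integrability.) *)
Definition L2_neg_halfline (psi : R -> R) : Prop :=
  ex_RInt_gen (fun x => psi x ^ 2) (Rbar_locally m_infty) (at_left 0).

Definition not_integer (x : R) : Prop := forall n : Z, x <> IZR n.

From Stdlib Require Import Reals ZArith Lia Lra Psatz Classical.
From Coquelicot Require Import Coquelicot.
Open Scope R_scope.

(* Choose a < b < sqrt F with g_n >= -a sqrt|n| and
   -(F x + E) >= b^2 |n| on [n - 1, n] for n far to the left.  On such an
   interval a solution whose Cauchy data (psi, psi') at the left end lie in
   the closed positive quadrant keeps them there, at least doubles in value,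
   and ends with psi' >= b sqrt|n| tanh(b sqrt|n|) psi >= a sqrt|n| psi, so
   the jump g_n psi(n) keeps the data in the quadrant: the quadrant is
   invariant from left to right.  Pieces on successive intervals are glued
   by linear transfer maps of determinant 1 (via the Wronskian), and a
   shooting argument (a monotone limit of slopes) yields data whose whole
   continuation to the left stays in the quadrant.  Going left the solution
   then halves on each interval, which makes it square integrable. *)

Lemma continuity_of_derive f f1 x : is_derive f x (f1 x) -> continuity_pt f x.
Proof.
  intro H. apply continuity_pt_filterlim.
  apply (@ex_derive_continuous R_AbsRing R_NormedModule f x). eexists; eauto.
Qed.

Lemma constant_of_derive_zero (h : R -> R) x y :
  (forall z, is_derive h z 0) -> h x = h y.
Proof.
  intro Hd. destruct (MVT_gen h y x (fun _ => 0)) as [c [_ Hc]].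
  - intros; apply Hd.
  - intros z _. apply (continuity_of_derive h (fun _ => 0)), Hd.
  - lra.
Qed.

Lemma nondecreasing_of_derive_nonneg (h dh : R -> R) a b :
  (forall x, a <= x <= b -> is_derive h x (dh x)) ->
  (forall x, a <= x <= b -> 0 <= dh x) ->
  forall x y, a <= x -> x <= y -> y <= b -> h x <= h y.
Proof.
  intros Hd Hp x y Hx Hxy Hy.
  destruct (Req_dec x y) as [->|Hne]; [lra|].
  destruct (MVT_gen h x y dh) as [c [Hc Heq]].
  - intros z Hz. rewrite Rmin_left, Rmax_right in Hz by lra. apply Hd. lra.
  - intros z Hz. rewrite Rmin_left, Rmax_right in Hz by lra.
    apply (continuity_of_derive h dh), Hd. lra.
  - rewrite Rmin_left, Rmax_right in Hc by lra.
    assert (0 <= dh c) by (apply Hp; lra). nra.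
Qed.

Lemma cosh_pos t : 0 < cosh t.
Proof. unfold cosh. pose proof (exp_pos t). pose proof (exp_pos (- t)). lra. Qed.

Lemma sinh_0 : sinh 0 = 0.
Proof. unfold sinh. rewrite Ropp_0. lra. Qed.

Lemma bounded_of_eventually_dominated (c : nat -> R) (K : nat) :
  (forall n, (K <= n)%nat -> c (n + 3)%nat <= Rmax (c (n + 1)%nat) (c n)) ->
  exists M, forall n, c n <= M.
Proof.
  intro Hdom.
  assert (Hprefix : forall N, exists M, forall i, (i <= N)%nat -> c i <= M).
  { induction N as [|N [M HM]].
    - exists (c O). intros i Hi. replace i with O by lia. lra.
    - exists (Rmax M (c (S N))). intros i Hi.
      destruct (Nat.eq_dec i (S N)) as [->|Hne]; [apply Rmax_r|].
      apply Rle_trans with M; [apply HM; lia | apply Rmax_l]. }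
  destruct (Hprefix (K + 2)%nat) as [M HM].
  exists M.
  assert (Hall : forall n m, (m <= n)%nat -> c m <= M).
  { induction n as [|n IH]; intros m Hm; [apply HM; lia|].
    destruct (Nat.eq_dec m (S n)) as [->|Hne]; [|apply IH; lia].
    destruct (le_lt_dec (S n) (K + 2)) as [Hle|Hlt]; [apply HM; lia|].
    replace (S n) with ((n - 2) + 3)%nat by lia.
    eapply Rle_trans; [apply Hdom; lia|].
    apply Rmax_lub; apply IH; lia. }
  intro n. apply (Hall n n). lia.
Qed.

Lemma nonneg_limit_affine (rho : nat -> R) (l al be : R) (n0 : nat) :
  is_lim_seq rho l -> (forall n, (n0 <= n)%nat -> 0 <= al + rho n * be) ->
  0 <= al + l * be.
Proof.
  intros Hl Hp.
  assert (H : is_lim_seq (fun n => al + rho n * be) (al + l * be)).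
  { apply is_lim_seq_plus'; [apply is_lim_seq_const | apply (is_lim_seq_scal_r rho be l Hl)]. }
  change (Rbar_le 0 (al + l * be)).
  apply (is_lim_seq_le_loc (fun _ => 0) _ 0 _ (ex_intro _ n0 Hp) (is_lim_seq_const 0) H).
Qed.

Lemma half_pow_sq_le_exp i : ((1 / 2) ^ i) ^ 2 <= exp (- INR i).
Proof.
  induction i as [|i IH]; [simpl; rewrite Ropp_0, exp_0; lra|].
  rewrite S_INR, Ropp_plus_distr, exp_plus. simpl in *.
  assert (He : / 3 <= exp (- (1)))
    by (rewrite exp_Ropp; apply Rinv_le_contravar; [apply exp_pos | apply exp_le_3]).
  assert (0 <= (1 / 2) ^ i) by (apply pow_le; lra).
  assert (0 < exp (- INR i)) by apply exp_pos.
  nra.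
Qed.

Lemma locally_open_interval a b x : a < x < b -> locally x (fun t => a < t < b).
Proof.
  intro H. assert (Hd : 0 < Rmin (x - a) (b - x)) by (apply Rmin_glb_lt; lra).
  exists (mkposreal _ Hd). intros t Ht. simpl in Ht.
  unfold ball in Ht; simpl in Ht; unfold AbsRing_ball, abs, minus, plus, opp in Ht; simpl in Ht.
  apply Rabs_def2 in Ht.
  pose proof (Rmin_l (x - a) (b - x)). pose proof (Rmin_r (x - a) (b - x)). lra.
Qed.

Lemma locally_lt (x c : R) : x < c -> locally x (fun y => y < c).
Proof.
  intro H. apply (filter_imp (fun y => x - 1 < y < c)); [intros y Hy; lra|].
  apply locally_open_interval. lra.
Qed.

Lemma filterlim_at_point_continuous (h : R -> R) a :
  continuous h a -> filterlim h (at_point a) (locally (h a)).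
Proof.
  intro Hc. apply (filterlim_filter_le_1 (F := locally a)); [|exact Hc].
  intros P HP. exact (locally_singleton a P HP).
Qed.

Lemma filterlim_at_left_continuous (h : R -> R) a :
  continuous h a -> filterlim h (at_left a) (locally (h a)).
Proof.
  intro Hc. apply (filterlim_filter_le_1 (F := locally a)); [|exact Hc].
  intros P [d Hd]. exists d. intros y Hy _. apply Hd; auto.
Qed.

Lemma filterlim_at_right_continuous (h : R -> R) a :
  continuous h a -> filterlim h (at_right a) (locally (h a)).
Proof.
  intro Hc. apply (filterlim_filter_le_1 (F := locally a)); [|exact Hc].
  intros P [d Hd]. exists d. intros y Hy _. apply Hd; auto.
Qed.

Lemma continuous_sq (f : R -> R) x : continuous f x -> continuous (fun y => f y ^ 2) x.
Proof.
  intro H. apply (continuous_ext (fun y => mult (f y) (f y))).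
  - intro y. unfold mult; simpl. ring.
  - apply (@continuous_mult R_UniformSpace R_AbsRing f f x); auto.
Qed.

Lemma nonincreasing_bounded_limit (h : R -> R) b M :
  (forall x y, x <= y <= b -> h y <= h x) -> (forall x, x <= b -> h x <= M) ->
  exists L, filterlim h (Rbar_locally m_infty) (locally L).
Proof.
  intros Hmono Hbd.
  destruct (completeness (fun v => exists a, a <= b /\ v = h a)) as [L [HL1 HL2]].
  { exists M. intros v [a [Ha ->]]. apply Hbd; auto. }
  { exists (h b). exists b. split; lra. }
  exists L. apply filterlim_locally. intro eps.
  assert (Hnear : exists a0, a0 <= b /\ L - eps < h a0).
  { apply NNPP. intro Hn. assert (L <= L - eps).
    { apply HL2. intros v [a [Ha ->]]. apply Rnot_lt_le. intro Hlt. apply Hn. exists a. auto. }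
    destruct eps; simpl in *; lra. }
  destruct Hnear as [a0 [Ha0 Ha0']].
  exists a0. intros a Ha. change (Rabs (h a - L) < eps).
  assert (h a0 <= h a) by (apply Hmono; lra).
  assert (h a <= L) by (apply HL1; exists a; split; lra).
  apply Rabs_def1; lra.
Qed.

Lemma ex_RInt_gen_of_antiderivative_limit (f K : R -> R) b c L :
  b < c -> (forall x, x < c -> is_derive K x (f x)) -> (forall x, x < c -> continuous f x) ->
  filterlim K (Rbar_locally m_infty) (locally L) ->
  ex_RInt_gen f (Rbar_locally m_infty) (at_point b).
Proof.
  intros Hbc HKd Hc HKlim.
  assert (Hwindow : filter_prod (Rbar_locally m_infty) (at_point b)
            (fun ab : R * R => forall x, Rmin (fst ab) (snd ab) <= x <= Rmax (fst ab) (snd ab) -> x < c)).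
  { apply Filter_prod with (fun a => a < b) (fun v => v = b); [exists b; auto | reflexivity|].
    intros u v Hu -> x Hx. cbn [fst snd] in Hx.
    assert (Rmax u b < c) by (apply Rmax_lub_lt; lra). lra. }
  assert (HG : is_RInt_gen (Derive K) (Rbar_locally m_infty) (at_point b) (K b - L)).
  { apply is_RInt_gen_Derive; [| |exact HKlim|].
    - eapply filter_imp; [|exact Hwindow]. intros ab H x Hx. eexists. apply HKd, H, Hx.
    - eapply filter_imp; [|exact Hwindow]. intros ab H x Hx.
      apply (continuous_ext_loc _ f); [|apply Hc, H, Hx].
      apply (filter_imp (fun y => y < c)); [|apply locally_lt, H, Hx].
      intros y Hy. symmetry. apply is_derive_unique, HKd, Hy.
    - apply filterlim_at_point_continuous, (@ex_derive_continuous R_AbsRing R_NormedModule).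
      eexists. apply HKd. lra. }
  apply (ex_RInt_gen_ext (Derive K)); [|eexists; exact HG].
  eapply filter_imp; [|exact Hwindow]. intros ab H x Hx.
  apply is_derive_unique, HKd, H. lra.
Qed.

(* Improper integrability at -oo of a continuous function with
   0 <= f x <= D e^x: the integrals of f over [a, b] increase as a -> -oo and are
   bounded by D e^b, hence converge. *)
Lemma ex_RInt_gen_exp_dominated (f : R -> R) b c D :
  b < c -> (forall x, x < c -> continuous f x) ->
  (forall x, x <= b -> 0 <= f x <= D * exp x) ->
  ex_RInt_gen f (Rbar_locally m_infty) (at_point b).
Proof.
  intros Hbc Hc Hbd.
  assert (Hex : forall u v, u < c -> v < c -> ex_RInt f u v).
  { intros u v Hu Hv. apply (ex_RInt_continuous (V := R_CompleteNormedModule)).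
    intros z Hz. apply Hc. assert (Rmax u v < c) by (apply Rmax_lub_lt; auto). lra. }
  set (K := fun x => RInt f b x).
  assert (HKa : forall a, a <= b -> - K a = RInt f a b).
  { intros a Ha. unfold K. rewrite <- (opp_RInt_swap f a b) by (apply Hex; lra).
    unfold opp; simpl. ring. }
  assert (Hmono : forall a a', a <= a' <= b -> - K a' <= - K a).
  { intros a a' Ha. rewrite !HKa by lra.
    rewrite <- (RInt_Chasles f a a' b) by (apply Hex; lra).
    assert (0 <= RInt f a a') by (apply RInt_ge_0; [lra | apply Hex; lra | intros; apply Hbd; lra]).
    change (plus (RInt f a a') (RInt f a' b)) with (RInt f a a' + RInt f a' b). lra. }
  assert (Hbound : forall a, a <= b -> - K a <= D * exp b).
  { intros a Ha. rewrite HKa by lra.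
    assert (HI : is_RInt (fun x => D * exp x) a b (minus (D * exp b) (D * exp a))).
    { apply (is_RInt_derive (fun x => D * exp x)).
      - intros x _. auto_derive; auto. ring.
      - intros x _. apply (@ex_derive_continuous R_AbsRing R_NormedModule). auto_derive; auto. }
    apply Rle_trans with (RInt (fun x => D * exp x) a b).
    - apply RInt_le; [lra | apply Hex; lra | eexists; eauto | intros x Hx; apply Hbd; lra].
    - rewrite (is_RInt_unique _ _ _ _ HI). unfold minus, plus, opp; simpl.
      assert (0 <= D * exp a) by (pose proof (Hbd a Ha); pose proof (exp_pos a); lra).
      lra. }
  destruct (nonincreasing_bounded_limit (fun a => - K a) b (D * exp b) Hmono Hbound) as [L HL].
  apply (ex_RInt_gen_of_antiderivative_limit f K b c (- L) Hbc); [| exact Hc |].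
  - intros x Hx. apply (is_derive_RInt f K b); [|apply Hc; auto].
    apply (filter_imp (fun y => y < c)); [|apply locally_lt; auto].
    intros y Hy. apply (RInt_correct (V := R_CompleteNormedModule)), Hex; lra.
  - apply (filterlim_ext (fun a => - - K a)); [intro; ring|].
    eapply filterlim_comp; [exact HL | apply (filterlim_opp L)].
Qed.

Lemma ex_RInt_gen_at_left_of_continuous (f h : R -> R) a b :
  a < b -> (forall x, continuous h x) -> (forall x, a < x < b -> f x = h x) ->
  ex_RInt_gen f (at_point a) (at_left b).
Proof.
  intros Hab Hc Hfh.
  set (K := fun x => RInt h a x).
  assert (HKd : forall x, is_derive K x (h x)).
  { intro x. apply (is_derive_RInt h K a); [|apply Hc].
    apply filter_forall. intro y.
    apply (RInt_correct (V := R_CompleteNormedModule)), (ex_RInt_continuous (V := R_CompleteNormedModule)).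
    intros; apply Hc. }
  assert (HDK : forall x, Derive K x = h x) by (intro x; apply is_derive_unique, HKd).
  assert (HKc : forall x, continuous K x)
    by (intro x; apply (@ex_derive_continuous R_AbsRing R_NormedModule); eexists; apply HKd).
  assert (HG : is_RInt_gen (Derive K) (at_point a) (at_left b) (K b - K a)).
  { apply is_RInt_gen_Derive.
    - apply filter_forall. intros ab x _. eexists. apply HKd.
    - apply filter_forall. intros ab x _. apply (continuous_ext h); [intro; symmetry; apply HDK | apply Hc].
    - apply filterlim_at_point_continuous, HKc.
    - apply filterlim_at_left_continuous, HKc. }
  apply (ex_RInt_gen_ext (Derive K)); [|eexists; exact HG].
  assert (Hd : 0 < b - a) by lra.
  apply Filter_prod with (fun u => u = a) (fun v => a < v < b); [reflexivity| |].
  - exists (mkposreal _ Hd). intros y Hy Hyb. simpl in Hy.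
    unfold ball in Hy; simpl in Hy; unfold AbsRing_ball, abs, minus, plus, opp in Hy; simpl in Hy.
    apply Rabs_def2 in Hy. lra.
  - intros u v -> Hv x Hx. cbn [fst snd] in Hx.
    rewrite Rmin_left, Rmax_right in Hx by lra. rewrite HDK, Hfh; [reflexivity | lra].
Qed.

Definition solves (F E : R) (f f1 : R -> R) : Prop :=
  forall x, is_derive f x (f1 x) /\ is_derive f1 x (- (F * x + E) * f x).

Lemma solves_lin F E f f1 h h1 a b :
  solves F E f f1 -> solves F E h h1 ->
  solves F E (fun x => a * f x + b * h x) (fun x => a * f1 x + b * h1 x).
Proof.
  intros Hf Hh x. destruct (Hf x) as [H1 H2]. destruct (Hh x) as [H3 H4]. split.
  - apply (is_derive_plus (fun x => a * f x) (fun x => b * h x));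
      apply is_derive_scal; auto.
  - evar (l : R). replace (- (F * x + E) * (a * f x + b * h x)) with l.
    + apply (is_derive_plus (fun x => a * f1 x) (fun x => b * h1 x));
        [apply is_derive_scal, H2 | apply is_derive_scal, H4].
    + unfold l. unfold plus, scal; simpl; unfold mult; simpl. ring.
Qed.

(* Taylor coefficients at 0 of the solution with psi(0) = y0, psi'(0) = y1:
   (n + 3)(n + 2) a_(n+3) = -(E a_(n+1) + F a_n), computed as a sliding triple. *)
Fixpoint coef_triple (F E y0 y1 : R) (n : nat) : R * R * R :=
  match n with
  | O => (y0, y1, - E * y0 / 2)
  | S m => let '(a, b, c) := coef_triple F E y0 y1 m in
           (b, c, - (E * b + F * a) / (INR (m + 3) * INR (m + 2)))
  end.

Definition series_coef (F E y0 y1 : R) (n : nat) : R :=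
  fst (fst (coef_triple F E y0 y1 n)).

Lemma series_coef_rec F E y0 y1 n :
  series_coef F E y0 y1 (n + 3) =
  - (E * series_coef F E y0 y1 (n + 1) + F * series_coef F E y0 y1 n)
  / (INR (n + 3) * INR (n + 2)).
Proof.
  unfold series_coef. replace (n + 3)%nat with (S (S (S n))) by lia.
  replace (n + 1)%nat with (S n) by lia.
  cbn [coef_triple]. destruct (coef_triple F E y0 y1 n) as [[a b] c]. cbn [fst snd].
  replace (INR (S (S (S n)))) with (INR (n + 3)) by (f_equal; lia). reflexivity.
Qed.

Definition scaled_coef F E y0 y1 (rho : R) (n : nat) : R :=
  Rabs (series_coef F E y0 y1 n) * rho ^ n.

Lemma scaled_coef_step F E y0 y1 rho n :
  0 <= rho -> Rabs E * rho ^ 2 + Rabs F * rho ^ 3 <= INR (n + 3) * INR (n + 2) ->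
  scaled_coef F E y0 y1 rho (n + 3) <=
  Rmax (scaled_coef F E y0 y1 rho (n + 1)) (scaled_coef F E y0 y1 rho n).
Proof.
  intros Hrho HD.
  set (a := series_coef F E y0 y1). set (t := scaled_coef F E y0 y1 rho).
  set (m := Rmax (t (n + 1)%nat) (t n)).
  assert (Hm1 : t (n + 1)%nat <= m) by apply Rmax_l.
  assert (Hm0 : t n <= m) by apply Rmax_r.
  assert (Ht0 : 0 <= t n) by (apply Rmult_le_pos; [apply Rabs_pos | apply pow_le; lra]).
  assert (HE : 0 <= Rabs E * rho ^ 2) by (apply Rmult_le_pos; [apply Rabs_pos | apply pow_le; lra]).
  assert (HF : 0 <= Rabs F * rho ^ 3) by (apply Rmult_le_pos; [apply Rabs_pos | apply pow_le; lra]).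
  set (D := INR (n + 3) * INR (n + 2)) in *.
  assert (HD0 : 0 < D) by (unfold D; apply Rmult_lt_0_compat; apply lt_0_INR; lia).
  assert (Hnum : Rabs (E * a (n + 1)%nat + F * a n) * rho ^ (n + 3) <= D * m).
  { assert (Hp1 : rho ^ (n + 3) = rho ^ (n + 1) * rho ^ 2) by (rewrite <- pow_add; f_equal; lia).
    assert (Hp0 : rho ^ (n + 3) = rho ^ n * rho ^ 3) by (rewrite <- pow_add; f_equal; lia).
    apply Rle_trans with ((Rabs E * Rabs (a (n + 1)%nat) + Rabs F * Rabs (a n)) * rho ^ (n + 3)).
    { apply Rmult_le_compat_r; [apply pow_le; lra|]. rewrite <- !Rabs_mult. apply Rabs_triang. }
    replace ((Rabs E * Rabs (a (n + 1)%nat) + Rabs F * Rabs (a n)) * rho ^ (n + 3))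
      with (Rabs E * rho ^ 2 * t (n + 1)%nat + Rabs F * rho ^ 3 * t n)
      by (unfold t, scaled_coef; fold a; rewrite Rmult_plus_distr_r;
          f_equal; [rewrite Hp1 | rewrite Hp0]; ring).
    nra. }
  unfold t at 1, scaled_coef. rewrite series_coef_rec. fold a D.
  unfold Rdiv. rewrite Rabs_mult, Rabs_Ropp, Rabs_inv, (Rabs_right D) by lra.
  apply Rmult_le_reg_l with D; [lra|].
  replace (D * (Rabs (E * a (n + 1)%nat + F * a n) * / D * rho ^ (n + 3)))
    with (Rabs (E * a (n + 1)%nat + F * a n) * rho ^ (n + 3)) by (field; lra).
  exact Hnum.
Qed.

Lemma series_coef_scaled_bounded F E y0 y1 r :
  exists M, forall n, Rabs (series_coef F E y0 y1 n * r ^ n) <= M.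
Proof.
  destruct (INR_unbounded (Rabs E * Rabs r ^ 2 + Rabs F * Rabs r ^ 3)) as [K HK].
  destruct (bounded_of_eventually_dominated (scaled_coef F E y0 y1 (Rabs r)) K) as [M HM].
  - intros n Hn. apply scaled_coef_step; [apply Rabs_pos|].
    assert (INR K <= INR n) by (apply le_INR; lia).
    assert (0 <= INR n) by apply pos_INR.
    rewrite !plus_INR. simpl. nra.
  - exists M. intro n. rewrite Rabs_mult, <- RPow_abs. apply HM.
Qed.

Lemma series_coef_radius F E y0 y1 : CV_radius (series_coef F E y0 y1) = p_infty.
Proof.
  destruct (CV_radius_bounded (series_coef F E y0 y1)) as [Hub _].
  assert (H : forall r : R, Rbar_le r (CV_radius (series_coef F E y0 y1)))
    by (intro r; apply Hub, series_coef_scaled_bounded).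
  destruct (CV_radius (series_coef F E y0 y1)) as [l| |]; auto.
  - specialize (H (l + 1)). simpl in H. lra.
  - specialize (H 0). contradiction.
Qed.

Lemma series_coef_in_radius F E y0 y1 x :
  Rbar_lt (Rabs x) (CV_radius (series_coef F E y0 y1)).
Proof. rewrite series_coef_radius. exact I. Qed.

Lemma series_coef_derive2 F E y0 y1 n :
  PS_derive (PS_derive (series_coef F E y0 y1)) n =
  PS_plus (PS_scal (- E) (series_coef F E y0 y1))
          (PS_scal (- F) (PS_incr_1 (series_coef F E y0 y1))) n.
Proof.
  unfold PS_derive, PS_plus, PS_scal, PS_incr_1, plus, scal; simpl. unfold mult; simpl.
  destruct n as [|m].
  - unfold series_coef, zero; simpl. field.
  - pose proof (series_coef_rec F E y0 y1 m) as H.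
    replace (m + 3)%nat with (S (S (S m))) in H by lia.
    replace (m + 1)%nat with (S m) in H by lia.
    rewrite H, !plus_INR, !S_INR. simpl.
    assert (0 <= INR m) by apply pos_INR.
    field. lra.
Qed.

Lemma series_solves F E y0 y1 :
  solves F E (PSeries (series_coef F E y0 y1))
             (PSeries (PS_derive (series_coef F E y0 y1))).
Proof.
  set (a := series_coef F E y0 y1).
  assert (Hin : forall x, ex_pseries a x)
    by (intro x; apply CV_radius_inside, series_coef_in_radius).
  intro x. split.
  - apply is_derive_PSeries, series_coef_in_radius.
  - replace (- (F * x + E) * PSeries a x)
      with (PSeries (PS_derive (PS_derive a)) x).
    + apply is_derive_PSeries. rewrite CV_radius_derive. apply series_coef_in_radius.
    + unfold a. rewrite (PSeries_ext _ _ x (series_coef_derive2 F E y0 y1)).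
      rewrite PSeries_plus, !PSeries_scal, PSeries_incr_1; [ring| |].
      * apply ex_pseries_scal; [apply Rmult_comm | apply Hin].
      * apply ex_pseries_scal; [apply Rmult_comm | apply ex_pseries_incr_1, Hin].
Qed.

Definition cos_sol F E := PSeries (series_coef F E 1 0).

Definition dcos_sol F E := PSeries (PS_derive (series_coef F E 1 0)).

Definition sin_sol F E := PSeries (series_coef F E 0 1).

Definition dsin_sol F E := PSeries (PS_derive (series_coef F E 0 1)).

Lemma cos_sol_solves F E : solves F E (cos_sol F E) (dcos_sol F E).
Proof. apply series_solves. Qed.

Lemma sin_sol_solves F E : solves F E (sin_sol F E) (dsin_sol F E).
Proof. apply series_solves. Qed.

(* Their Wronskian is constant, equal to its value 1 at 0. *)
Lemma wronskian F E x :
  cos_sol F E x * dsin_sol F E x - dcos_sol F E x * sin_sol F E x = 1.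
Proof.
  set (W := fun x => cos_sol F E x * dsin_sol F E x - dcos_sol F E x * sin_sol F E x).
  change (W x = 1). rewrite (constant_of_derive_zero W x 0).
  - unfold W, cos_sol, dcos_sol, sin_sol, dsin_sol. rewrite !PSeries_0.
    unfold PS_derive, series_coef. simpl. ring.
  - intro z. destruct (cos_sol_solves F E z) as [H1 H2].
    destruct (sin_sol_solves F E z) as [H3 H4].
    evar (l : R). replace 0 with l.
    + apply (is_derive_minus (fun x => cos_sol F E x * dsin_sol F E x)
                             (fun x => dcos_sol F E x * sin_sol F E x)).
      * apply (is_derive_mult _ _ z _ _ H1 H4). intros; apply Rmult_comm.
      * apply (is_derive_mult _ _ z _ _ H2 H3). intros; apply Rmult_comm.
    + unfold l, minus, plus, opp, mult; simpl. ring.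
Qed.

Section UnitIntervalComparison.

Variables (F E : R) (f f1 : R -> R).
Hypothesis Hsol : solves F E f f1.

(* Positive value and nonnegative slope at a persist to the right: f f' and f^2
   are nondecreasing, so f cannot vanish. *)
Lemma solution_positive_forward a b :
  a <= b -> (forall x, a <= x <= b -> 0 <= - (F * x + E)) ->
  0 < f a -> 0 <= f1 a ->
  forall x, a <= x <= b -> 0 < f x /\ 0 <= f1 x.
Proof.
  intros Hab Hq Hfa Hf1a.
  assert (Hprod : forall x, a <= x <= b -> f a * f1 a <= f x * f1 x).
  { intros x Hx. apply (nondecreasing_of_derive_nonneg (fun x => f x * f1 x)
       (fun x => f1 x * f1 x + f x * (- (F * x + E) * f x)) a b); try lra.
    - intros z _. destruct (Hsol z) as [H1 H2].
      apply (is_derive_mult f f1 z _ _ H1 H2). intros; apply Rmult_comm.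
    - intros z Hz. specialize (Hq z Hz). nra. }
  assert (Hsq : forall x, a <= x <= b -> f a * f a <= f x * f x).
  { intros x Hx. apply (nondecreasing_of_derive_nonneg (fun x => f x * f x)
       (fun x => f1 x * f x + f x * f1 x) a b); try lra.
    - intros z _. destruct (Hsol z) as [H1 _].
      apply (is_derive_mult f f z _ _ H1 H1). intros; apply Rmult_comm.
    - intros z Hz. specialize (Hprod z Hz). nra. }
  assert (Hpos : forall x, a <= x <= b -> 0 < f x).
  { intros x Hx. destruct (Rlt_le_dec 0 (f x)) as [H|H]; auto. exfalso.
    assert (Hneg : f x < 0) by (specialize (Hsq x Hx); destruct (Req_dec (f x) 0); nra).
    assert (Hax : a < x) by (destruct (Req_dec a x) as [<-|]; lra).
    destruct (Ranalysis5.IVT_interv (fun t => - f t) a x) as [z [Hz Hz0]]; try lra.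
    - intros t _. apply continuity_pt_opp, (continuity_of_derive f f1), Hsol.
    - specialize (Hsq z ltac:(lra)). nra. }
  intros x Hx. specialize (Hprod x Hx). specialize (Hpos x Hx). split; nra.
Qed.

(* Nonzero data in the positive quadrant stay there on [k, k + 1], and the value
   at k + 1 is positive (if f(k) = 0, f' > 0 first makes f positive). *)
Lemma solution_nonneg_forward k :
  (forall x, k <= x <= k + 1 -> 0 <= - (F * x + E)) ->
  0 <= f k -> 0 <= f1 k -> (0 < f k \/ 0 < f1 k) ->
  (forall x, k <= x <= k + 1 -> 0 <= f x /\ 0 <= f1 x) /\ 0 < f (k + 1).
Proof.
  intros Hq Hf Hf1 Hor.
  destruct (Rlt_le_dec 0 (f k)) as [Hfk|Hfk].
  { pose proof (solution_positive_forward k (k + 1) ltac:(lra) Hq Hfk Hf1) as H.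
    split; [intros x Hx; destruct (H x Hx); split; lra | apply H; lra]. }
  assert (Hf0 : f k = 0) by lra. destruct Hor as [Hor|Hor]; [lra|].
  assert (Hc : continuity_pt f1 k)
    by (apply (continuity_of_derive f1 (fun x => - (F * x + E) * f x)), Hsol).
  destruct (Hc (f1 k) Hor) as [alp [Halp Hal]].
  set (d := Rmin (alp / 2) (1 / 2)).
  assert (Hd0 : 0 < d) by (unfold d; apply Rmin_glb_lt; lra).
  assert (Hd1 : d <= 1 / 2) by apply Rmin_r.
  assert (Hd2 : d <= alp / 2) by apply Rmin_l.
  assert (Hf1p : forall y, k <= y <= k + d -> 0 < f1 y).
  { intros y Hy. destruct (Req_dec y k) as [->|Hne]; auto.
    assert (Rabs (f1 y - f1 k) < f1 k).
    { specialize (Hal y). simpl in Hal. unfold R_dist in Hal.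
      apply Hal. split; [split; [exact I | intro; apply Hne; auto] | rewrite Rabs_right; lra]. }
    apply Rabs_def2 in H. lra. }
  assert (Hmon : forall x y, k <= x -> x <= y -> y <= k + d -> f x <= f y).
  { apply (nondecreasing_of_derive_nonneg f f1 k (k + d)).
    - intros z _; apply Hsol.
    - intros z Hz. left; apply Hf1p; lra. }
  assert (Hfd : 0 < f (k + d)).
  { destruct (MVT_gen f k (k + d) f1) as [c [Hc1 Hc2]].
    - intros z _. apply Hsol.
    - intros z _. apply (continuity_of_derive f f1), Hsol.
    - rewrite Rmin_left, Rmax_right in Hc1 by lra.
      assert (0 < f1 c) by (apply Hf1p; lra). nra. }
  pose proof (solution_positive_forward (k + d) (k + 1) ltac:(lra)
                ltac:(intros; apply Hq; lra) Hfd ltac:(left; apply Hf1p; lra)) as H.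
  split; [|apply H; lra].
  intros x Hx. destruct (Rle_dec x (k + d)) as [Hxd|Hxd].
  - split; [rewrite <- Hf0; apply Hmon; lra | left; apply Hf1p; lra].
  - destruct (H x ltac:(lra)). split; lra.
Qed.

(* Since f'' >= s0^2 f(k), comparison with a parabola gives the growth
   f(k + 1) >= (1 + s0^2 / 2) f(k). *)
Lemma solution_growth k s0 :
  (forall x, k <= x <= k + 1 -> s0 * s0 <= - (F * x + E)) ->
  (forall x, k <= x <= k + 1 -> 0 <= f x /\ f k <= f x) -> 0 <= f1 k ->
  (1 + s0 * s0 / 2) * f k <= f (k + 1).
Proof.
  intros Hq Hf Hf1.
  set (c := s0 * s0 * f k).
  assert (Hslope : forall x y, k <= x -> x <= y -> y <= k + 1 ->
            f1 x - c * (x - k) <= f1 y - c * (y - k)).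
  { apply (nondecreasing_of_derive_nonneg (fun x => f1 x - c * (x - k))
             (fun x => - (F * x + E) * f x - c) k (k + 1)).
    - intros z _. destruct (Hsol z) as [_ H2].
      evar (l : R). replace (- (F * z + E) * f z - c) with l.
      + apply (is_derive_minus f1 (fun x => c * (x - k))); [exact H2 | auto_derive; auto].
      + unfold l, minus, plus, opp; simpl. ring.
    - intros z Hz. specialize (Hq z Hz). destruct (Hf z Hz). unfold c. nra. }
  assert (Hval : f k - c * (k - k) ^ 2 / 2 <= f (k + 1) - c * (k + 1 - k) ^ 2 / 2).
  { apply (nondecreasing_of_derive_nonneg (fun x => f x - c * (x - k) ^ 2 / 2)
             (fun x => f1 x - c * (x - k)) k (k + 1)); try lra.
    - intros z _. destruct (Hsol z) as [H1 _].
      evar (l : R). replace (f1 z - c * (z - k)) with l.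
      + apply (is_derive_minus f (fun x => c * (x - k) ^ 2 / 2)); [exact H1 | auto_derive; auto].
      + unfold l, minus, plus, opp; simpl. field.
    - intros z Hz. specialize (Hslope k z ltac:(lra) ltac:(lra) ltac:(lra)).
      replace (k - k) with 0 in Hslope by ring. lra. }
  replace (k - k) with 0 in Hval by ring. replace (k + 1 - k) with 1 in Hval by ring.
  unfold c in Hval. lra.
Qed.

(* The Wronskian of f with cosh(s0 (x - k)) is nondecreasing, whence
   f'(k + 1) cosh s0 >= s0 sinh s0 f(k + 1). *)
Lemma solution_slope k s0 :
  (forall x, k <= x <= k + 1 -> s0 * s0 <= - (F * x + E)) ->
  (forall x, k <= x <= k + 1 -> 0 <= f x) ->
  0 <= f1 k ->
  s0 * sinh s0 * f (k + 1) <= cosh s0 * f1 (k + 1).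
Proof.
  intros Hq Hf Hf1.
  set (phi := fun x => cosh (s0 * (x - k))).
  set (dphi := fun x => s0 * sinh (s0 * (x - k))).
  assert (Hphi : forall x, is_derive phi x (dphi x))
    by (intro x; unfold phi, dphi, cosh, sinh; auto_derive; auto; unfold Rminus; field).
  assert (Hdphi : forall x, is_derive dphi x (s0 * s0 * phi x))
    by (intro x; unfold phi, dphi, cosh, sinh; auto_derive; auto; unfold Rminus; field).
  assert (Hw : f1 k * phi k - f k * dphi k <= f1 (k + 1) * phi (k + 1) - f (k + 1) * dphi (k + 1)).
  { apply (nondecreasing_of_derive_nonneg (fun x => f1 x * phi x - f x * dphi x)
             (fun x => (- (F * x + E) - s0 * s0) * f x * phi x) k (k + 1)); try lra.
    - intros z _. destruct (Hsol z) as [H1 H2].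
      evar (l : R). replace ((- (F * z + E) - s0 * s0) * f z * phi z) with l.
      + apply (is_derive_minus (fun x => f1 x * phi x) (fun x => f x * dphi x)).
        * apply (is_derive_mult f1 phi); [exact H2 | apply Hphi | intros; apply Rmult_comm].
        * apply (is_derive_mult f dphi); [exact H1 | apply Hdphi | intros; apply Rmult_comm].
      + unfold l, minus, plus, opp, mult; simpl. ring.
    - intros z Hz. specialize (Hq z Hz). specialize (Hf z Hz).
      assert (0 < phi z) by apply cosh_pos.
      apply Rmult_le_pos; [apply Rmult_le_pos|]; lra. }
  unfold phi, dphi in Hw. replace (k - k) with 0 in Hw by ring.
  replace (k + 1 - k) with 1 in Hw by ring. rewrite Rmult_0_r, !Rmult_1_r, cosh_0, sinh_0 in Hw.
  specialize (Hf k ltac:(lra)). nra.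
Qed.

Lemma solution_unit_interval k s0 :
  (forall x, k <= x <= k + 1 -> s0 * s0 <= - (F * x + E)) ->
  0 <= f k -> 0 <= f1 k -> (0 < f k \/ 0 < f1 k) ->
  (forall x, k <= x <= k + 1 -> 0 <= f x <= f (k + 1)) /\ 0 < f (k + 1) /\
  (1 + s0 * s0 / 2) * f k <= f (k + 1) /\
  s0 * sinh s0 * f (k + 1) <= cosh s0 * f1 (k + 1).
Proof.
  intros Hq Hf Hf1 Hor.
  assert (Hq0 : forall x, k <= x <= k + 1 -> 0 <= - (F * x + E))
    by (intros x Hx; specialize (Hq x Hx); nra).
  destruct (solution_nonneg_forward k Hq0 Hf Hf1 Hor) as [Hnn Hpos].
  assert (Hmon : forall x y, k <= x -> x <= y -> y <= k + 1 -> f x <= f y)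
    by (apply (nondecreasing_of_derive_nonneg f f1 k (k + 1));
        [intros z _; apply Hsol | intros z Hz; apply Hnn; auto]).
  split; [|split; [exact Hpos | split]].
  - intros x Hx. split; [apply Hnn; auto | apply Hmon; lra].
  - apply (solution_growth k s0 Hq); [|exact Hf1].
    intros x Hx. split; [apply Hnn; auto | apply Hmon; lra].
  - apply (solution_slope k s0 Hq); [intros x Hx; apply Hnn; auto | exact Hf1].
Qed.

End UnitIntervalComparison.

Definition junction_condition (F E : R) (g : Z -> R) (a b : R) (m : nat) : Prop :=
  - (a * sqrt (INR m)) <= g (- Z.of_nat m)%Z /\
  b * b * INR m <= F * INR m - E /\
  2 <= b * b * INR m /\
  a * sqrt (INR m) * cosh (b * sqrt (INR m)) <= b * sqrt (INR m) * sinh (b * sqrt (INR m)).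

(* A cosh S <= S sinh S, i.e. tanh S >= A / S, follows from e^(2S) >= 1 + 2S. *)
Lemma cosh_sinh_comparison A S :
  0 <= A <= S -> S + A <= (S - A) * (1 + 2 * S) -> A * cosh S <= S * sinh S.
Proof.
  intros [HA HS] H.
  unfold cosh, sinh. set (e := exp S). set (e' := exp (- S)).
  assert (Hee : e * e' = 1)
    by (unfold e, e'; rewrite <- exp_plus, Rplus_opp_r; apply exp_0).
  assert (He2 : 1 + 2 * S <= e * e)
    by (unfold e; rewrite <- exp_plus; replace (S + S) with (2 * S) by ring; apply exp_ineq1_le).
  assert (He : 0 < e) by apply exp_pos.
  assert (Hk : S + A <= (S - A) * (e * e)) by nra.
  apply Rmult_le_reg_l with (2 * e); [lra|].
  replace (2 * e * (A * ((e + e') / 2))) with (A * (e * e) + A * (e * e')) by field.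
  replace (2 * e * (S * ((e - e') / 2))) with (S * (e * e) - S * (e * e')) by field.
  rewrite Hee. lra.
Qed.

Lemma junction_condition_of_large F E g a b m :
  0 < a < b -> b * b < F ->
  - (a * sqrt (INR m)) <= g (- Z.of_nat m)%Z ->
  2 / (b * b) + Rabs E / (F - b * b) + (a / (b * (b - a))) ^ 2 < INR m ->
  junction_condition F E g a b m.
Proof.
  intros Hab HbF Hg Hm.
  assert (HX1 : 0 <= 2 / (b * b)) by (apply Rdiv_le_0_compat; nra).
  assert (HX2 : 0 <= Rabs E / (F - b * b)) by (apply Rdiv_le_0_compat; [apply Rabs_pos | lra]).
  assert (HX3 : 0 <= (a / (b * (b - a))) ^ 2) by apply pow2_ge_0.
  set (r := sqrt (INR m)).
  assert (Hr0 : 0 < r) by (apply sqrt_lt_R0; lra).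
  assert (Hrr : r * r = INR m) by (apply sqrt_sqrt; lra).
  split; [exact Hg | split; [|split]].
  - assert (HE : E <= Rabs E) by apply Rle_abs.
    assert (E / (F - b * b) <= INR m).
    { apply Rle_trans with (Rabs E / (F - b * b)); [|lra].
      apply Rmult_le_compat_r; [left; apply Rinv_0_lt_compat; lra | exact HE]. }
    apply Rmult_le_compat_r with (r := F - b * b) in H; [|lra].
    replace (E / (F - b * b) * (F - b * b)) with E in H by (field; lra). nra.
  - assert (H : 2 / (b * b) <= INR m) by lra.
    apply Rmult_le_compat_r with (r := b * b) in H; [|nra].
    replace (2 / (b * b) * (b * b)) with 2 in H by (field; lra). lra.
  - assert (Hra : a / (b * (b - a)) <= r).
    { apply Rsqr_incr_0_var; [|lra]. unfold Rsqr. rewrite Hrr.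
      replace (a / (b * (b - a)) * (a / (b * (b - a)))) with ((a / (b * (b - a))) ^ 2)
        by ring. lra. }
    assert (Hra2 : a <= r * (b * (b - a))).
    { assert (Hbb : 0 < b * (b - a)) by (apply Rmult_lt_0_compat; lra).
      replace a with (a / (b * (b - a)) * (b * (b - a))) at 1
        by (unfold Rdiv; rewrite Rmult_assoc, Rinv_l, Rmult_1_r; lra).
      apply Rmult_le_compat_r; [left; exact Hbb | exact Hra]. }
    assert (Hkey : 0 <= r * (r * (b * (b - a)) - a)) by (apply Rmult_le_pos; lra).
    fold r. apply cosh_sinh_comparison;
      [split; [apply Rmult_le_pos | apply Rmult_le_compat_r]; lra | nra].
Qed.

Lemma liminf_eventually_above (F : R) (u : nat -> R) :
  0 < F -> Rbar_lt (Finite (- sqrt F)) (LimInf_seq u) ->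
  exists c, - sqrt F < c /\ exists N, forall n, (N <= n)%nat -> c < u n.
Proof.
  intros HF H. assert (HsF : 0 < sqrt F) by (apply sqrt_lt_R0; auto).
  unfold LimInf_seq in H. destruct (ex_LimInf_seq u) as [l Hl]. simpl in H.
  destruct l as [l| |]; simpl in *.
  - assert (Heps : 0 < (l + sqrt F) / 2) by lra.
    destruct (Hl (mkposreal _ Heps)) as [_ [N HN]]. simpl in HN.
    exists (l - (l + sqrt F) / 2). split; [lra|]. exists N. intros n Hn. apply HN; auto.
  - destruct (Hl 0) as [N HN]. exists 0. split; [lra|]. exists N. auto.
  - contradiction.
Qed.

(* Constants 0 < a < b < sqrt F and N0 such that the junction condition holds
   at every m >= N0 (taking a >= -c and b the midpoint of a and sqrt F). *)
Lemma thresholds (F E : R) (g : Z -> R) :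
  0 < F -> Rbar_lt (Finite (- sqrt F)) (LimInf_seq (scaled_seq g)) ->
  exists a b (N0 : nat), 0 < a < b /\
    forall m : nat, (N0 <= m)%nat -> junction_condition F E g a b m.
Proof.
  intros HF Hlim.
  destruct (liminf_eventually_above F _ HF Hlim) as [c [Hc [N1 HN1]]].
  set (sF := sqrt F) in *. assert (HsF : 0 < sF) by (apply sqrt_lt_R0; auto).
  assert (HsF2 : sF * sF = F) by (apply sqrt_sqrt; lra).
  set (a := Rmax (- c) (sF / 2)).
  assert (Ha1 : - c <= a) by apply Rmax_l. assert (Ha2 : sF / 2 <= a) by apply Rmax_r.
  assert (Ha3 : a < sF) by (apply Rmax_lub_lt; lra).
  set (b := (a + sF) / 2).
  set (X := 2 / (b * b) + Rabs E / (F - b * b) + (a / (b * (b - a))) ^ 2).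
  destruct (INR_unbounded (Rmax X (INR N1 + 1))) as [N0 HN0].
  assert (HX : X <= Rmax X (INR N1 + 1)) by apply Rmax_l.
  assert (HN : INR N1 + 1 <= Rmax X (INR N1 + 1)) by apply Rmax_r.
  exists a, b, N0. split; [unfold b; lra|].
  intros m Hm.
  assert (HmN : INR N0 <= INR m) by (apply le_INR; auto).
  apply junction_condition_of_large; [unfold b; lra | unfold b; nra | | fold X; lra].
  (* the liminf hypothesis at index m - 1 gives g(-m) > c sqrt m >= - a sqrt m *)
  assert (HN1m : (N1 < m)%nat) by (apply INR_lt; lra).
  specialize (HN1 (m - 1)%nat ltac:(lia)). unfold scaled_seq in HN1.
  replace (Z.of_nat (m - 1) + 1)%Z with (Z.of_nat m) in HN1 by lia.
  rewrite opp_IZR, <- INR_IZR_INZ, Rabs_Ropp, Rabs_right in HN1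
    by (pose proof (pos_INR N1); lra).
  assert (Hr0 : 0 < sqrt (INR m)) by (apply sqrt_lt_R0; pose proof (pos_INR N1); lra).
  assert (c * sqrt (INR m) < g (- Z.of_nat m)%Z).
  { apply Rmult_lt_reg_l with (/ sqrt (INR m)); [apply Rinv_0_lt_compat; auto|].
    replace (/ sqrt (INR m) * (c * sqrt (INR m))) with c by (field; lra). lra. }
  nra.
Qed.

(* Pairs of reals, used both as coefficients in the basis (cos_sol, sin_sol)
   and as Cauchy data (value, derivative). *)
Definition pair_comb (x y : R) (p q : R * R) : R * R :=
  (x * fst p + y * fst q, x * snd p + y * snd q).

Definition det2 (p q : R * R) : R := fst p * snd q - snd p * fst q.

(* Coefficients of the solution that has the same value at t as the solution
   with coefficients p, and whose derivative at t is smaller by gt times it. *)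
Definition transfer F E (t gt : R) (p : R * R) : R * R :=
  let val := fst p * cos_sol F E t + snd p * sin_sol F E t in
  let der := fst p * dcos_sol F E t + snd p * dsin_sol F E t - gt * val in
  (dsin_sol F E t * val - sin_sol F E t * der, - dcos_sol F E t * val + cos_sol F E t * der).

(* Coefficients of the piece living on [-(j + 1), -j], starting from c on [-1, 0]. *)
Fixpoint glued_coeffs F E (g : Z -> R) (c : R * R) (j : nat) : R * R :=
  match j with
  | O => c
  | S i => transfer F E (- INR (S i)) (g (- Z.of_nat (S i))%Z) (glued_coeffs F E g c i)
  end.

Definition piece F E g c j x :=
  fst (glued_coeffs F E g c j) * cos_sol F E x + snd (glued_coeffs F E g c j) * sin_sol F E x.

Definition dpiece F E g c j x :=
  fst (glued_coeffs F E g c j) * dcos_sol F E x + snd (glued_coeffs F E g c j) * dsin_sol F E x.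

Lemma piece_solves F E g c j : solves F E (piece F E g c j) (dpiece F E g c j).
Proof. apply solves_lin; [apply cos_sol_solves | apply sin_sol_solves]. Qed.

Lemma piece_junction F E g c j :
  piece F E g c (S j) (- INR (S j)) = piece F E g c j (- INR (S j)) /\
  dpiece F E g c j (- INR (S j)) - dpiece F E g c (S j) (- INR (S j)) =
  g (- Z.of_nat (S j))%Z * piece F E g c (S j) (- INR (S j)).
Proof.
  unfold piece, dpiece. cbn [glued_coeffs]. set (t := - INR (S j)). unfold transfer.
  destruct (glued_coeffs F E g c j) as [p1 p2]. cbn [fst snd].
  pose proof (wronskian F E t) as HW.
  set (U := cos_sol F E t) in *. set (U1 := dcos_sol F E t) in *.
  set (V := sin_sol F E t) in *. set (V1 := dsin_sol F E t) in *.
  set (G := g (- Z.of_nat (S j))%Z).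
  split.
  - transitivity ((p1 * U + p2 * V) * (U * V1 - U1 * V)); [ring | rewrite HW; ring].
  - transitivity (G * ((p1 * U + p2 * V) * (U * V1 - U1 * V))); [|ring].
    transitivity (G * (p1 * U + p2 * V) * (U * V1 - U1 * V)
                  + (p1 * U1 + p2 * V1) * (1 - (U * V1 - U1 * V))); [ring|].
    rewrite HW. ring.
Qed.

Definition left_data F E g c j : R * R :=
  (piece F E g c j (- (INR j + 1)), dpiece F E g c j (- (INR j + 1))).

Lemma glued_coeffs_lin F E g x y p q j :
  glued_coeffs F E g (pair_comb x y p q) j =
  pair_comb x y (glued_coeffs F E g p j) (glued_coeffs F E g q j).
Proof.
  induction j as [|j IH]; [reflexivity|].
  cbn [glued_coeffs]. rewrite IH. unfold transfer, pair_comb.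
  destruct (glued_coeffs F E g p j), (glued_coeffs F E g q j). cbn [fst snd].
  f_equal; ring.
Qed.

Lemma left_data_lin F E g x y p q j :
  left_data F E g (pair_comb x y p q) j =
  pair_comb x y (left_data F E g p j) (left_data F E g q j).
Proof.
  unfold left_data, piece, dpiece. rewrite glued_coeffs_lin. unfold pair_comb.
  destruct (glued_coeffs F E g p j), (glued_coeffs F E g q j). cbn [fst snd].
  f_equal; ring.
Qed.

Lemma left_data_decomp F E g p j :
  left_data F E g p j =
  pair_comb (fst p) (snd p) (left_data F E g (1, 0) j) (left_data F E g (0, 1) j).
Proof.
  rewrite <- left_data_lin. f_equal. destruct p. unfold pair_comb. cbn [fst snd].
  f_equal; ring.
Qed.

Lemma glued_coeffs_det F E g p q j :
  det2 (glued_coeffs F E g p j) (glued_coeffs F E g q j) = det2 p q.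
Proof.
  induction j as [|j IH]; [reflexivity|].
  cbn [glued_coeffs]. rewrite <- IH. set (t := - INR (S j)).
  pose proof (wronskian F E t) as HW. unfold transfer, det2.
  destruct (glued_coeffs F E g p j) as [a1 a2], (glued_coeffs F E g q j) as [b1 b2].
  cbn [fst snd].
  set (U := cos_sol F E t) in *. set (U1 := dcos_sol F E t) in *.
  set (V := sin_sol F E t) in *. set (V1 := dsin_sol F E t) in *.
  transitivity ((U * V1 - U1 * V) * (U * V1 - U1 * V) * (a1 * b2 - a2 * b1)); [ring|].
  rewrite HW. ring.
Qed.

Lemma left_data_det F E g p q j :
  det2 (left_data F E g p j) (left_data F E g q j) = det2 p q.
Proof.
  rewrite <- (glued_coeffs_det F E g p q j). unfold left_data, piece, dpiece, det2.
  destruct (glued_coeffs F E g p j) as [a1 a2], (glued_coeffs F E g q j) as [b1 b2].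
  cbn [fst snd]. set (t := - (INR j + 1)). pose proof (wronskian F E t) as HW.
  set (U := cos_sol F E t) in *. set (U1 := dcos_sol F E t) in *.
  set (V := sin_sol F E t) in *. set (V1 := dsin_sol F E t) in *.
  transitivity ((U * V1 - U1 * V) * (a1 * b2 - a2 * b1)); [ring|]. rewrite HW. ring.
Qed.

Definition in_cone (p : R * R) : Prop := 0 <= fst p /\ 0 <= snd p.

Definition nonzero_pair (p : R * R) : Prop := 0 < fst p \/ 0 < snd p.

Section Shooting.

Variable Y : R * R -> nat -> R * R.
Variable s : nat.
Hypothesis Ylin : forall y j, Y y j = pair_comb (fst y) (snd y) (Y (1, 0) j) (Y (0, 1) j).
Hypothesis Ydet : forall j, det2 (Y (1, 0) j) (Y (0, 1) j) = 1.
Hypothesis Yinit : forall y, Y y s = y.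
Hypothesis Yback : forall y j, (s <= j)%nat -> in_cone (Y y (S j)) -> nonzero_pair (Y y (S j)) ->
  0 < fst (Y y j) /\ 0 <= snd (Y y j).

Lemma Y_scal y j t : Y (t * fst y, t * snd y) j = (t * fst (Y y j), t * snd (Y y j)).
Proof.
  rewrite (Ylin (t * fst y, t * snd y)), (Ylin y). unfold pair_comb. cbn [fst snd].
  f_equal; ring.
Qed.

Lemma cone_backward y N j :
  in_cone (Y y N) -> nonzero_pair (Y y N) -> (s <= j < N)%nat ->
  0 < fst (Y y j) /\ 0 <= snd (Y y j).
Proof.
  intros HK Hn Hj.
  assert (Hd : forall d, (s <= N - S d)%nat -> (S d <= N)%nat ->
             0 < fst (Y y (N - S d)%nat) /\ 0 <= snd (Y y (N - S d)%nat)).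
  { induction d as [|d IH]; intros Hs HN.
    - apply Yback; [lia| |]; replace (S (N - 1)) with N by lia; assumption.
    - destruct (IH ltac:(lia) ltac:(lia)) as [H1 H2].
      apply Yback; [lia| |]; replace (S (N - S (S d))) with (N - S d)%nat by lia;
        [split; lra | left; exact H1]. }
  replace j with (N - S (N - S j))%nat by lia. apply Hd; lia.
Qed.

(* The initial data whose data at N are (0, 1), and the slope they define. *)
Definition shooting_data (N : nat) : R * R := (- fst (Y (0, 1) N), fst (Y (1, 0) N)).

Lemma shooting_data_end N : Y (shooting_data N) N = (0, 1).
Proof.
  rewrite Ylin. unfold shooting_data, pair_comb. cbn [fst snd].
  pose proof (Ydet N) as H. unfold det2 in H. f_equal; lra.
Qed.

Lemma shooting_cone N j : (s <= j < N)%nat ->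
  0 < fst (Y (shooting_data N) j) /\ 0 <= snd (Y (shooting_data N) j).
Proof.
  intro Hj. apply (cone_backward _ N); [| |exact Hj]; rewrite shooting_data_end;
    unfold in_cone, nonzero_pair; simpl; lra.
Qed.

Lemma shooting_data_pos N : (s < N)%nat ->
  0 < fst (shooting_data N) /\ 0 <= snd (shooting_data N).
Proof. intro HN. rewrite <- (Yinit (shooting_data N)). apply shooting_cone. lia. Qed.

Definition shooting_ratio (N : nat) : R := snd (shooting_data N) / fst (shooting_data N).

Lemma shooting_ratio_in_cone N j : (s < N)%nat -> (s <= j <= N)%nat ->
  in_cone (Y (1, shooting_ratio N) j).
Proof.
  intros HN Hj. destruct (shooting_data_pos N HN) as [Hp _].
  set (y := shooting_data N) in *.
  assert (Hy : (1, shooting_ratio N) = (/ fst y * fst y, / fst y * snd y))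
    by (unfold shooting_ratio; fold y; rewrite Rinv_l by lra; f_equal; unfold Rdiv; ring).
  rewrite Hy, Y_scal. assert (0 < / fst y) by (apply Rinv_0_lt_compat; auto).
  assert (HK : in_cone (Y y j)).
  { destruct (Nat.eq_dec j N) as [->|Hne].
    - unfold y. rewrite shooting_data_end. unfold in_cone; simpl; lra.
    - unfold y. destruct (shooting_cone N j ltac:(lia)). split; lra. }
  destruct HK. split; cbn [fst snd]; nra.
Qed.

Lemma shooting_ratio_nonincreasing N M : (s < N)%nat -> (N <= M)%nat ->
  shooting_ratio M <= shooting_ratio N.
Proof.
  intros HN HNM. destruct (shooting_ratio_in_cone M N ltac:(lia) ltac:(lia)) as [HK _].
  rewrite Ylin in HK. unfold pair_comb in HK. cbn [fst snd] in HK.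
  destruct (shooting_data_pos N HN) as [Hp _]. unfold shooting_data in Hp. cbn [fst] in Hp.
  unfold shooting_ratio at 2, shooting_data. cbn [fst snd].
  apply Rmult_le_reg_r with (- fst (Y (0, 1) N)); [lra|].
  unfold Rdiv. rewrite Rmult_assoc, Rinv_l, Rmult_1_r by lra. lra.
Qed.

(* The limit r of the nonincreasing nonnegative ratios keeps all data in the
   quadrant; they are nonzero since the determinant is 1. *)
Theorem shooting :
  exists r, forall j, (s <= j)%nat -> in_cone (Y (1, r) j) /\ nonzero_pair (Y (1, r) j).
Proof.
  set (rho := fun n => shooting_ratio (S s + n)).
  destruct (decreasing_cv rho) as [r Hr].
  { intro n. apply shooting_ratio_nonincreasing; lia. }
  { exists 0. intros x [n ->]. unfold rho, opp_seq.
    destruct (shooting_data_pos (S s + n) ltac:(lia)).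
    assert (0 <= shooting_ratio (S s + n)) by (apply Rdiv_le_0_compat; lra). lra. }
  apply is_lim_seq_Reals in Hr.
  exists r. intros j Hj.
  assert (Hlim : forall n, (j <= n)%nat -> in_cone (Y (1, rho n) j))
    by (intros n Hn; apply shooting_ratio_in_cone; lia).
  assert (HK : in_cone (Y (1, r) j)).
  { rewrite Ylin. unfold pair_comb, in_cone. cbn [fst snd]. rewrite !Rmult_1_l.
    split; apply (nonneg_limit_affine rho r _ _ j Hr); intros n Hn;
      destruct (Hlim n Hn) as [A B]; rewrite Ylin in A, B; unfold pair_comb in A, B;
      cbn [fst snd] in A, B; rewrite Rmult_1_l in A, B; assumption. }
  split; [exact HK|].
  assert (Hdet : det2 (Y (1, r) j) (Y (0, 1) j) = 1).
  { rewrite Ylin. pose proof (Ydet j) as H. unfold det2, pair_comb in *. cbn [fst snd]. nra. }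
  destruct HK as [A B]. unfold nonzero_pair, det2 in *.
  destruct (Req_dec (fst (Y (1, r) j)) 0) as [H0|H0]; [right|left; lra].
  destruct (Req_dec (snd (Y (1, r) j)) 0) as [H1|H1]; [rewrite H0, H1 in Hdet; lra | lra].
Qed.

End Shooting.

Lemma junction_step F E g a b c j :
  0 < F -> 0 < a < b -> junction_condition F E g a b (S j) ->
  in_cone (left_data F E g c (S j)) -> nonzero_pair (left_data F E g c (S j)) ->
  0 < fst (left_data F E g c j) /\ 0 <= snd (left_data F E g c j) /\
  2 * fst (left_data F E g c (S j)) <= fst (left_data F E g c j) /\
  (forall x, - (INR (S j) + 1) <= x <= - INR (S j) ->
      0 <= piece F E g c (S j) x <= fst (left_data F E g c j)).
Proof.
  intros HF Hab [Hg [Hq [H2 Hsh]]] HK Hn.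
  set (m := INR (S j)) in *.
  assert (Hm0 : 0 < m) by (unfold m; apply lt_0_INR; lia).
  set (r := sqrt m) in *.
  assert (Hr0 : 0 < r) by (apply sqrt_lt_R0; auto).
  assert (Hrr : r * r = m) by (apply sqrt_sqrt; lra).
  set (s0 := b * r) in *.
  assert (Hs0 : s0 * s0 = b * b * m) by (unfold s0; rewrite <- Hrr; ring).
  set (k := - (m + 1)).
  assert (Hqq : forall x, k <= x <= k + 1 -> s0 * s0 <= - (F * x + E))
    by (intros x Hx; unfold k in Hx; assert (0 <= F * (- m - x)) by (apply Rmult_le_pos; lra);
        lra).
  unfold in_cone, nonzero_pair, left_data in HK, Hn. cbn [fst snd] in HK, Hn. fold m k in HK, Hn.
  destruct HK as [HK1 HK2].
  destruct (solution_unit_interval F E _ _ (piece_solves F E g c (S j)) k s0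
              Hqq HK1 HK2 Hn) as [Hb [Hp [Hgrow Hslope]]].
  destruct (piece_junction F E g c j) as [J1 J2]. fold m in J1, J2.
  assert (Hk1 : k + 1 = - m) by (unfold k; ring).
  assert (HLj : left_data F E g c j =
            (piece F E g c (S j) (k + 1),
             dpiece F E g c (S j) (k + 1) + g (- Z.of_nat (S j))%Z * piece F E g c (S j) (k + 1))).
  { unfold left_data. replace (- (INR j + 1)) with (- m) by (unfold m; rewrite S_INR; ring).
    rewrite Hk1. f_equal; lra. }
  rewrite HLj. cbn [fst snd].
  set (f := piece F E g c (S j) (k + 1)) in *. set (f1 := dpiece F E g c (S j) (k + 1)) in *.
  assert (Hch : 0 < cosh s0) by apply cosh_pos.
  assert (Hf1 : a * r * f <= f1).
  { apply Rmult_le_reg_l with (cosh s0); auto.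
    assert (a * r * cosh s0 * f <= s0 * sinh s0 * f) by (apply Rmult_le_compat_r; lra). nra. }
  split; [exact Hp | split; [nra | split]].
  - unfold left_data. cbn [fst]. fold m k. nra.
  - intros x Hx. apply Hb. unfold k. lra.
Qed.

Lemma left_data_normalization F E g s :
  exists p q, forall y, left_data F E g (pair_comb (fst y) (snd y) p q) s = y.
Proof.
  set (A := left_data F E g (1, 0) s). set (B := left_data F E g (0, 1) s).
  assert (HAB : det2 A B = 1) by (unfold A, B; rewrite left_data_det; unfold det2; simpl; ring).
  exists (snd B, - snd A), (- fst B, fst A). intros [y1 y2].
  rewrite left_data_lin, (left_data_decomp F E g (snd B, _)), (left_data_decomp F E g (- fst B, _)).
  fold A B. unfold pair_comb, det2 in *. cbn [fst snd] in *. f_equal.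
  - transitivity (y1 * (fst A * snd B - snd A * fst B)); [ring | rewrite HAB; ring].
  - transitivity (y2 * (fst A * snd B - snd A * fst B)); [ring | rewrite HAB; ring].
Qed.

(* A glued solution equal to 1 at -(s + 1) and bounded by 2^-(j - s - 1) on
   [-(j + 1), -j] for j > s: shoot from index s, then the values halve going left. *)
Lemma decaying_solution F E g :
  0 < F -> Rbar_lt (Finite (- sqrt F)) (LimInf_seq (scaled_seq g)) ->
  exists c s,
    piece F E g c (S s) (- INR (S s)) = 1 /\
    forall j, (S s <= j)%nat -> forall x, - (INR j + 1) <= x <= - INR j ->
      0 <= piece F E g c j x <= (1 / 2) ^ (j - S s).
Proof.
  intros HF Hg.
  destruct (thresholds F E g HF Hg) as [a [b [N0 [Hab Hth]]]].
  set (s := (N0 - 1)%nat).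
  destruct (left_data_normalization F E g s) as [p [q Hpq]].
  set (Y := fun y j => left_data F E g (pair_comb (fst y) (snd y) p q) j).
  assert (Ylin : forall y j, Y y j = pair_comb (fst y) (snd y) (Y (1, 0) j) (Y (0, 1) j)).
  { intros y j. unfold Y. rewrite !left_data_lin. unfold pair_comb. cbn [fst snd].
    f_equal; ring. }
  assert (Ydet : forall j, det2 (Y (1, 0) j) (Y (0, 1) j) = 1).
  { intro j. unfold Y. rewrite left_data_det, <- (left_data_det F E g _ _ s), !Hpq.
    unfold det2. simpl. ring. }
  assert (Yback : forall y j, (s <= j)%nat -> in_cone (Y y (S j)) -> nonzero_pair (Y y (S j)) ->
            0 < fst (Y y j) /\ 0 <= snd (Y y j)).
  { intros y j Hj HK Hn.
    destruct (junction_step F E g a b _ j HF Hab (Hth (S j) ltac:(lia)) HK Hn) as [H1 [H2 _]].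
    auto. }
  destruct (shooting Y s Ylin Ydet Hpq Yback) as [r Hr].
  set (c := pair_comb (fst (1, r)) (snd (1, r)) p q).
  set (V := fun j => fst (left_data F E g c j)).
  assert (HVs : V s = 1) by (unfold V, c; rewrite Hpq; reflexivity).
  assert (Hstep : forall j, (s <= j)%nat -> 2 * V (S j) <= V j /\
            (forall x, - (INR (S j) + 1) <= x <= - INR (S j) ->
               0 <= piece F E g c (S j) x <= V j)).
  { intros j Hj. destruct (Hr (S j) ltac:(lia)) as [HK Hn].
    destruct (junction_step F E g a b c j HF Hab (Hth (S j) ltac:(lia)) HK Hn)
      as [_ [_ [H3 H4]]].
    split; [exact H3 | exact H4]. }
  assert (HV : forall i, V (s + i)%nat <= (1 / 2) ^ i).
  { induction i as [|i IH]; [rewrite Nat.add_0_r, HVs; simpl; lra|].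
    destruct (Hstep (s + i)%nat ltac:(lia)) as [H2 _].
    replace (s + S i)%nat with (S (s + i)) by lia. simpl. lra. }
  exists c, s. split.
  - destruct (piece_junction F E g c s) as [J1 _]. rewrite J1, <- HVs.
    unfold V, left_data. cbn [fst]. rewrite S_INR. reflexivity.
  - intros [|j] Hj x Hx; [lia|].
    destruct (Hstep j ltac:(lia)) as [_ H3].
    destruct (H3 x ltac:(rewrite S_INR in *; lra)) as [H4 H5].
    specialize (HV (j - s)%nat). replace (s + (j - s))%nat with j in HV by lia.
    replace (S j - S s)%nat with (j - s)%nat by lia. lra.
Qed.

(* The function on (-oo, 0) equal to P j on [-(j + 1), -j). *)
Definition glue (P : nat -> R -> R) (x : R) : R := P (Z.to_nat (- up x)) x.

Lemma glue_eq P j x : - (INR j + 1) <= x < - INR j -> glue P x = P j x.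
Proof.
  intro H. unfold glue. replace (Z.to_nat (- up x)) with j; [reflexivity|].
  assert (Hu : up x = (- Z.of_nat j)%Z)
    by (symmetry; apply tech_up; rewrite opp_IZR, <- INR_IZR_INZ; lra).
  rewrite Hu, Z.opp_involutive, Nat2Z.id. reflexivity.
Qed.

Lemma negative_in_unit_interval x : x < 0 -> exists j, - (INR j + 1) <= x < - INR j.
Proof.
  intro Hx. destruct (archimed x) as [H1 H2].
  assert (Hup : (up x < 1)%Z) by (apply lt_IZR; lra).
  exists (Z.to_nat (- up x)).
  rewrite INR_IZR_INZ, Z2Nat.id, opp_IZR by lia. lra.
Qed.

Section Glued.

Variables (F E : R) (g : Z -> R) (P P1 : nat -> R -> R).
Hypothesis Hsol : forall j, solves F E (P j) (P1 j).
Hypothesis Hjunction : forall j,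
  P (S j) (- INR (S j)) = P j (- INR (S j)) /\
  P1 j (- INR (S j)) - P1 (S j) (- INR (S j)) = g (- Z.of_nat (S j))%Z * P (S j) (- INR (S j)).

Lemma glue_derive j x : - (INR j + 1) < x < - INR j -> is_derive (glue P) x (P1 j x).
Proof.
  intro H. apply (is_derive_ext_loc (P j)); [|apply Hsol].
  apply (filter_imp (fun t => - (INR j + 1) < t < - INR j)); [|apply locally_open_interval, H].
  intros t Ht. symmetry. apply glue_eq. lra.
Qed.

Lemma glue_derive2 j x : - (INR j + 1) < x < - INR j ->
  is_derive (Derive (glue P)) x (- (F * x + E) * P j x).
Proof.
  intro H. apply (is_derive_ext_loc (P1 j)); [|apply Hsol].
  apply (filter_imp (fun t => - (INR j + 1) < t < - INR j)); [|apply locally_open_interval, H].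
  intros t Ht. symmetry. apply is_derive_unique, glue_derive, Ht.
Qed.

Lemma glue_continuous_at_junction j : continuity_pt (glue P) (- INR (S j)).
Proof.
  set (t := - INR (S j)). destruct (Hjunction j) as [J1 _]. fold t in J1.
  assert (Ht : t = - (INR j + 1)) by (unfold t; rewrite S_INR; ring).
  assert (Hpt : glue P t = P j t) by (apply glue_eq; lra).
  apply continuity_pt_filterlim, filterlim_locally. intro eps.
  assert (C : forall i, locally t (fun y => ball (P i t) eps (P i y))).
  { intro i. assert (Hc : filterlim (P i) (locally t) (locally (P i t)))
      by (apply continuity_pt_filterlim, (continuity_of_derive (P i) (P1 i)), Hsol).
    exact (proj1 (filterlim_locally _ _) Hc eps). }
  generalize (filter_and _ _ (C j) (filter_and _ _ (C (S j))
                (locally_open_interval (t - 1) (t + 1) t ltac:(lra)))).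
  apply filter_imp. intros y [Hy1 [Hy2 Hy3]]. rewrite Hpt.
  destruct (Rle_lt_dec t y) as [Hty|Hty].
  - rewrite (glue_eq P j y) by lra. exact Hy1.
  - rewrite (glue_eq P (S j) y), <- J1 by (rewrite S_INR; lra). exact Hy2.
Qed.

Lemma glue_derivative_jump j :
  filterlim (fun e => Derive (glue P) (- INR (S j) + e) - Derive (glue P) (- INR (S j) - e))
    (at_right 0) (locally (g (- Z.of_nat (S j))%Z * glue P (- INR (S j)))).
Proof.
  set (t := - INR (S j)). destruct (Hjunction j) as [J1 J2]. fold t in J1, J2.
  assert (Ht : t = - (INR j + 1)) by (unfold t; rewrite S_INR; ring).
  set (h := fun e => P1 j (t + e) - P1 (S j) (t - e)).
  apply (filterlim_ext_loc h).
  { exists (mkposreal 1 Rlt_0_1). intros e He Hpos. simpl in He.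
    unfold ball in He; simpl in He; unfold AbsRing_ball, abs, minus, plus, opp in He; simpl in He.
    apply Rabs_def2 in He. unfold h. f_equal.
    - symmetry. apply is_derive_unique, glue_derive. lra.
    - symmetry. apply is_derive_unique, glue_derive. rewrite S_INR. lra. }
  replace (g (- Z.of_nat (S j))%Z * glue P t) with (h 0)
    by (unfold h; rewrite Rplus_0_r, Rminus_0_r, (glue_eq P j t), <- J1 by lra; exact J2).
  apply filterlim_at_right_continuous, (@ex_derive_continuous R_AbsRing R_NormedModule h 0).
  apply (ex_derive_minus (fun e => P1 j (t + e)) (fun e => P1 (S j) (t - e))).
  - apply (ex_derive_comp (P1 j) (fun e => t + e)); [eexists; apply Hsol | auto_derive; auto].
  - apply (ex_derive_comp (P1 (S j)) (fun e => t - e)); [eexists; apply Hsol | auto_derive; auto].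
Qed.

Lemma glue_continuous x : x < 0 -> continuous (glue P) x.
Proof.
  intro Hx. destruct (negative_in_unit_interval x Hx) as [j Hj].
  destruct (Req_dec x (- (INR j + 1))) as [He|Hne].
  - apply continuity_pt_filterlim.
    replace x with (- INR (S j)) by (rewrite S_INR; lra). apply glue_continuous_at_junction.
  - apply (@ex_derive_continuous R_AbsRing R_NormedModule).
    eexists. apply (glue_derive j x). lra.
Qed.

(* Square integrability: exponential bound far left, continuity in between,
   and near 0 the glued function is the entire solution P 0. *)
Lemma glue_L2 s :
  (forall j, (S s <= j)%nat -> forall x, - (INR j + 1) <= x <= - INR j ->
     0 <= P j x <= (1 / 2) ^ (j - S s)) ->
  L2_neg_halfline (glue P).
Proof.
  intro Hdecay.
  set (f2 := fun x => glue P x ^ 2).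
  assert (Hc : forall x, x < 0 -> continuous f2 x)
    by (intros x Hx; apply continuous_sq, glue_continuous, Hx).
  set (b0 := - (INR (S s) + 1)).
  assert (Hb0 : b0 <= - 2) by (unfold b0; rewrite S_INR; pose proof (pos_INR s); lra).
  assert (Hexp : forall x, x <= b0 -> 0 <= f2 x <= exp (INR (S s) + 1) * exp x).
  { intros x Hx. destruct (negative_in_unit_interval x ltac:(lra)) as [j Hj].
    assert (HjS : (S s <= j)%nat) by (apply INR_le; unfold b0 in Hx; lra).
    unfold f2. rewrite (glue_eq P j x Hj).
    destruct (Hdecay j HjS x ltac:(lra)) as [H1 H2].
    split; [apply pow2_ge_0|].
    set (i := (j - S s)%nat) in *.
    assert (Hji : INR j = INR i + INR (S s)) by (rewrite <- plus_INR; f_equal; unfold i; lia).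
    apply Rle_trans with (((1 / 2) ^ i) ^ 2); [apply pow_incr; lra|].
    apply Rle_trans with (exp (- INR i)); [apply half_pow_sq_le_exp|].
    rewrite <- exp_plus.
    destruct (Req_dec (- INR i) (INR (S s) + 1 + x)) as [Heq|Hneq];
      [rewrite Heq; lra | left; apply exp_increasing; lra]. }
  unfold L2_neg_halfline. fold f2.
  apply (ex_RInt_gen_Chasles f2 b0).
  { apply (ex_RInt_gen_exp_dominated f2 b0 0 (exp (INR (S s) + 1))); [lra | exact Hc | exact Hexp]. }
  apply (ex_RInt_gen_Chasles f2 (-1)).
  { apply (proj2 (@ex_RInt_gen_at_point R_CompleteNormedModule _ _ _)).
    apply (ex_RInt_continuous (V := R_CompleteNormedModule)).
    intros z Hz. apply Hc.
    assert (Hm : Rmax b0 (-1) = -1) by (apply Rmax_right; lra). lra. }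
  apply (ex_RInt_gen_at_left_of_continuous f2 (fun x => P 0%nat x ^ 2)); [lra| |].
  - intro x. apply continuous_sq, (@ex_derive_continuous R_AbsRing R_NormedModule).
    exists (P1 0%nat x). exact (proj1 (Hsol 0%nat x)).
  - intros x Hx. unfold f2. rewrite (glue_eq P 0 x); [reflexivity | simpl; lra].
Qed.

End Glued.

Theorem lemma2p2 (F : R) (g : Z -> R)
  (HF : 0 < F)
  (Hg : Rbar_lt (Finite (- sqrt F)) (LimInf_seq (scaled_seq g))) :
  forall E : R,
  exists psi : R -> R,
    L2_neg_halfline psi /\
    (exists x, x < 0 /\ psi x <> 0) /\
    (forall x, x < 0 -> not_integer x ->
       ex_derive psi x /\ ex_derive_n psi 2 x /\
       - Derive_n psi 2 x - F * x * psi x = E * psi x) /\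
    (forall n : Z, (n < 0)%Z ->
       continuity_pt psi (IZR n) /\
       filterlim (fun eps => Derive psi (IZR n + eps) - Derive psi (IZR n - eps))
         (at_right 0) (locally (g n * psi (IZR n)))).
Proof.
  intro E.
  destruct (decaying_solution F E g HF Hg) as [c [s [Hone Hdecay]]].
  set (P := piece F E g c). set (P1 := dpiece F E g c).
  assert (Hsol : forall j, solves F E (P j) (P1 j)) by (intro j; apply piece_solves).
  assert (Hjunction := piece_junction F E g c).
  exists (glue P). split; [|split; [|split]].
  - exact (glue_L2 F E g P P1 Hsol Hjunction s Hdecay).
  - exists (- INR (S s)). split; [pose proof (lt_0_INR (S s) ltac:(lia)); lra|].
    rewrite (glue_eq P s) by (rewrite S_INR; lra).
    destruct (Hjunction s) as [J1 _]. unfold P. rewrite <- J1, Hone. lra.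
  - intros x Hx Hni. destruct (negative_in_unit_interval x Hx) as [j Hj].
    assert (Hj' : - (INR j + 1) < x < - INR j).
    { split; [|lra]. destruct (proj1 Hj) as [Hlt|Heq]; [exact Hlt|].
      exfalso. apply (Hni (- (Z.of_nat j + 1))%Z).
      rewrite <- Heq, opp_IZR, plus_IZR, <- INR_IZR_INZ. reflexivity. }
    pose proof (glue_derive F E P P1 Hsol j x Hj') as Hd1.
    pose proof (glue_derive2 F E P P1 Hsol j x Hj') as Hd2.
    split; [eexists; eauto | split; [eexists; eauto|]].
    change (Derive_n (glue P) 2 x) with (Derive (Derive (glue P)) x).
    rewrite (is_derive_unique _ _ _ Hd2), (glue_eq P j x) by lra. ring.
  - intros n Hn.
    replace n with (- Z.of_nat (S (Z.to_nat (- n) - 1)))%Z by lia.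
    rewrite opp_IZR, <- INR_IZR_INZ. split.
    + apply (glue_continuous_at_junction F E g P P1 Hsol Hjunction).
    + apply (glue_derivative_jump F E g P P1 Hsol Hjunction).
Qed.
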